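(* There exist absolute constants $C,\bar C$ such that for all $n\ge1$ and $d\ge C$, with $S_n^d=\sum_{\ell=1}^dP_n^\ell$ where $P_n^\ell(i,j)=\mathbf 1(\pi_n^\ell(i)=j)$ for independent uniformly random permutations $\pi_n^1,\dots,\pi_n^d$ of $[n]$: (i) $\mathbb P\big(\operatorname{Tr}S_n^d(S_n^d)^*\ge nd+xd^2\big)\le d\,e^{-d(x-e)}$ for all $x\ge e$; (ii) $\mathbb E\operatorname{Tr}\big(S_n^d(S_n^d)^*\big)^2\le 2nd^2+\bar Cd^4$. *)

From HB Require Import structures.
From mathcomp Require Import all_boot all_order all_algebra all_fingroup.
From mathcomp Require Import reals.
From mathcomp Require Import sequences exp.
Set Implicit Arguments. Unset Strict Implicit. Unset Printing Implicit Defensive.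
Import Order.TTheory GRing.Theory Num.Theory.
Local Open Scope ring_scope.

(* A sample of d independent uniform random permutations of [n] = 'I_n. *)
Definition perm_sample (n d : nat) := {ffun 'I_d -> {perm 'I_n}}.

Definition Smat (R : realType) (n d : nat) (p : perm_sample n d) : 'M[R]_n :=
  \sum_(l < d) perm_mx (p l).

Definition unif_prob (R : realType) (T : finType) (E : pred T) : R :=
  #|E|%:R / #|T|%:R.
Definition unif_exp (R : realType) (T : finType) (f : T -> R) : R :=
  (\sum_(t : T) f t) / #|T|%:R.

From HB Require Import structures.
From mathcomp Require Import all_boot all_order all_algebra all_fingroup.
From mathcomp Require Import reals.
From mathcomp Require Import sequences exp.
From mathcomp Require Import ring lra.
Import Order.TTheory GRing.Theory Num.Theory.
Local Open Scope ring_scope.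

(* Expanding the trace, Tr S S^T = \sum_(a,b) fix(pi_a pi_b^-1) and
   Tr (S S^T)^2 = \sum_(a,b,c,e) fix(pi_a pi_b^-1 pi_c pi_e^-1), where fix counts
   fixed points.  Multiplying a uniform permutation by an independent one keeps it
   uniform, so a word in which some letter occurs once is a uniform permutation,
   whose expected number of fixed points is 1; the words pi_a pi_b^-1 pi_a pi_b^-1
   are squares of uniform permutations, with at most 2 expected fixed points; the
   remaining 2 d^2 words, pi_a pi_a^-1 pi_c pi_c^-1 and pi_a pi_b^-1 pi_b pi_a^-1,
   are the identity and contribute n.
   For (i), E e^(fix sigma) = \sum_(k <= n) (e - 1)^k / k! <= e^(e - 1), and the
   same change of variables makes the row sums Z_a = \sum_b fix(pi_b pi_a^-1)
   satisfy E e^(Z_a) <= e^n e^((e - 1)(d - 1)).  Since e^y >= 1 + y, the event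
   Tr S S^T >= d T forces \sum_a e^(Z_a - T) >= 1, and Markov's inequality with
   T = n + x d concludes. *)

Lemma sum_andb_eq (R : pzSemiRingType) (I : finType) (x : bool) (i : I) :
  \sum_j ((x && (i == j))%:R : R) = x%:R.
Proof.
rewrite (bigD1 i) //= eqxx andbT big1 ?addr0 // => j /negbTE.
by rewrite eq_sym => ->; rewrite andbF.
Qed.

Lemma sum_set_by_card (V : nmodType) (T : finType) (F : nat -> V) :
  \sum_(J : {set T}) F #|J| = \sum_(k < #|T|.+1) F k *+ 'C(#|T|, k).
Proof.
rewrite (partition_big (fun J : {set T} => inord #|J| : 'I_#|T|.+1) xpredT) //=.
apply: eq_bigr => k _.
have cardJ (J : {set T}) : (inord #|J| == k :> 'I_#|T|.+1) = (#|J| == k).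
  by rewrite -(inj_eq val_inj) /= inordK // ltnS max_card.
rewrite (eq_bigl _ _ cardJ) (eq_bigr (fun _ => F k)) => [|J /eqP -> //].
by rewrite sumr_const -card_draws; congr (_ *+ _); apply: eq_card => J; rewrite inE.
Qed.

Lemma mul_fact_pred_leq k : (k * k.-1`! <= k`!)%N.
Proof. by case: k => // k; rewrite factS. Qed.

Lemma four_letters_unique {T : eqType} {a b c e : T} :
  ~~ ((a == b) && (c == e)) -> ~~ ((b == c) && (a == e)) ->
  ~~ ((a == c) && (b == e)) ->
  [\/ a \notin [:: b; c; e], c \notin [:: e; a; b], e \notin [:: c; b; a]
    | b \notin [:: a; e; c]].
Proof.
rewrite !inE; have [<-{b} /= ce _ _ | ab] := eqVneq a b.
  have [ca | _] := eqVneq c a; [apply: Or43 | apply: Or42].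
    by rewrite -ca !orbb eq_sym.
  by rewrite !orbF.
have [<-{c} /= _ _ be | ac] := eqVneq a c.
  by apply: Or44; rewrite (negbTE be) eq_sym (negbTE ab).
have [<-{e} /= _ /[!andbT] bc _ | ae] := eqVneq a e.
  by apply: Or44; rewrite (negbTE bc) eq_sym (negbTE ab).
by move=> _ _ _; apply: Or41.
Qed.

Lemma expR_ge_partial_sum (R : realType) (x : R) N : 0 <= x ->
  \sum_(k < N) x ^+ k / k`!%:R <= expR x.
Proof.
move=> x_ge0.
have nd : nondecreasing_seq (series (exp_coeff x)).
  apply/nondecreasing_seqP => m; rewrite /series /= big_nat_recr //= lerDl.
  exact: exp_coeff_ge0.
have := nondecreasing_cvgn_le nd (is_cvg_series_exp_coeff x) N.
by rewrite /series /= big_mkord.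
Qed.

Lemma one_le_sum_expR (R : realType) (I : finType) (Z : I -> R) (T : R) :
  (0 < #|I|)%N -> #|I|%:R * T <= \sum_i Z i -> 1 <= \sum_i expR (Z i - T).
Proof.
move=> I_gt0 mean_ge.
apply: le_trans (ler_sum _ (fun i _ => expR_ge1Dx (Z i - T))).
rewrite big_split sumrB /= !sumr_const -[T *+ _]mulr_natl.
have : 1 <= #|I|%:R :> R by rewrite ler1n.
lra.
Qed.

Section UniformExpectation.
Context {R : realType} {T : finType}.
Implicit Types f g : T -> R.

Lemma unif_probE (E : pred T) : unif_prob R E = unif_exp (fun t => (E t)%:R).
Proof.
rewrite /unif_prob /unif_exp -sum1_card natr_sum big_mkcond /=.
by congr (_ / _); apply: eq_bigr => t _; rewrite unfold_in; case: (E t).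
Qed.

Lemma eq_unif_exp {f g} : f =1 g -> unif_exp f = unif_exp g.
Proof. by move=> fg; rewrite /unif_exp (eq_bigr _ (fun t _ => fg t)). Qed.

Lemma ler_unif_exp f g : (forall t, f t <= g t) -> unif_exp f <= unif_exp g.
Proof.
by move=> fg; rewrite /unif_exp ler_wpM2r ?invr_ge0 ?ler0n // ler_sum.
Qed.

Lemma unif_exp_ge0 f : (forall t, 0 <= f t) -> 0 <= unif_exp f.
Proof. by move=> f_ge0; rewrite /unif_exp divr_ge0 ?ler0n ?sumr_ge0. Qed.

Lemma unif_exp_sum (I : Type) (r : seq I) (P : pred I) (F : I -> T -> R) :
  unif_exp (fun t => \sum_(i <- r | P i) F i t) =
  \sum_(i <- r | P i) unif_exp (F i).
Proof. by rewrite /unif_exp exchange_big mulr_suml. Qed.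

Lemma unif_expMr f (c : R) : unif_exp (fun t => f t * c) = unif_exp f * c.
Proof. by rewrite /unif_exp -big_distrl mulrAC. Qed.

Lemma unif_exp_cst (c : R) : (0 < #|T|)%N -> unif_exp (fun _ : T => c) = c.
Proof.
move=> T_gt0; rewrite /unif_exp sumr_const -[c *+ _]mulr_natr mulfK //.
by rewrite pnatr_eq0 -lt0n.
Qed.

Lemma unif_exp_inj f (h : T -> T) :
  injective h -> unif_exp (f \o h) = unif_exp f.
Proof. by move=> h_inj; rewrite /unif_exp [in RHS](reindex_inj h_inj). Qed.

End UniformExpectation.

Section IndependentCoordinates.
Context {R : realType} {I T : finType}.
Local Notation sample := {ffun I -> T}.

Lemma unif_exp_prod (f : I -> T -> R) :
  unif_exp (fun p : sample => \prod_i f i (p i)) = \prod_i unif_exp (f i).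
Proof.
by rewrite /unif_exp prodf_div bigA_distr_bigA prodr_const card_ffun natrX.
Qed.

Lemma unif_exp_coord (g : T -> R) (i : I) :
  (0 < #|T|)%N -> unif_exp (fun p : sample => g (p i)) = unif_exp g.
Proof.
move=> T_gt0; pose f j t := if j == i then g t else 1.
transitivity (unif_exp (fun p : sample => \prod_j f j (p j))).
  by apply: eq_unif_exp => p; rewrite -big_mkcond big_pred1_eq.
rewrite unif_exp_prod (bigD1 i) //= big1 ?mulr1 => [|j /negbTE ji].
  by rewrite /f eqxx.
by rewrite /f ji unif_exp_cst.
Qed.

End IndependentCoordinates.

Section GroupSamples.
Context {R : realType} {I : finType} {gT : finGroupType}.
Local Notation sample := {ffun I -> gT}.

Let card_gT_gt0 : (0 < #|gT|)%N.
Proof. by apply/card_gt0P; exists 1%g. Qed.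

Lemma unif_exp_mul_indep (a : I) (W : sample -> gT) (G : gT -> R) :
  (forall p q : sample, (forall b, b != a -> p b = q b) -> W p = W q) ->
  unif_exp (fun p : sample => G (p a * W p)%g) = unif_exp G.
Proof.
move=> W_indep.
pose shift (V : sample -> gT) (p : sample) : sample :=
  [ffun b => if b == a then (p a * V p)%g else p b].
have W_shift V (p : sample) : W (shift V p) = W p.
  by apply: W_indep => b /negbTE ba; rewrite ffunE ba.
have shiftK : cancel (shift W) (shift (fun p => (W p)^-1)%g).
  move=> p; apply/ffunP => b; rewrite !ffunE.
  by case: eqP => [-> | //]; rewrite eqxx W_shift mulgK.
rewrite -(unif_exp_coord G a card_gT_gt0).
rewrite -(unif_exp_inj (fun p : sample => G (p a)) _ (can_inj shiftK)).
by apply: eq_unif_exp => p /=; rewrite ffunE eqxx.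
Qed.

(* In the coordinates p b * p a (b != a) and p a, which are again independent
   and uniform, the b-th factor only depends on the b-th coordinate. *)
Lemma unif_exp_prod_rel (a : I) (f : I -> gT -> R) :
  unif_exp (fun p : sample => \prod_b f b (p b * (p a)^-1)%g) =
  f a 1%g * \prod_(b | b != a) unif_exp (f b).
Proof.
pose shift (p : sample) (s : gT) : sample :=
  [ffun b => if b == a then p a else (p b * s)%g].
have shiftK : cancel (fun p => shift p (p a)) (fun p => shift p (p a)^-1%g).
  move=> p; apply/ffunP => b; rewrite !ffunE eqxx.
  by case: eqP => [-> | _]; rewrite ?mulgK.
rewrite -(unif_exp_inj _ _ (can_inj shiftK)).
pose g b t := f b (if b == a then 1 else t)%g.
transitivity (unif_exp (fun p : sample => \prod_b g b (p b))).
  apply: eq_unif_exp => p; apply: eq_bigr => b _ /=; rewrite !ffunE eqxx /g.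
  by case: eqP => _; rewrite ?mulgV ?mulgK.
rewrite unif_exp_prod (bigD1 a) //= /g eqxx unif_exp_cst //.
by congr (_ * _); apply: eq_bigr => b /negbTE ->.
Qed.

End GroupSamples.

Section FixedPoints.
Variables (R : realType) (n : nat).
Implicit Types s t : 'S_n.

Definition nfix s : R := \tr (perm_mx s).

Lemma nfixE s : nfix s = \sum_i (s i == i)%:R.
Proof. by apply: eq_bigr => i _; rewrite !mxE. Qed.

Lemma nfixC s t : nfix (s * t) = nfix (t * s).
Proof. by rewrite /nfix !perm_mxM mxtrace_mulC. Qed.

Lemma nfixV s : nfix s^-1 = nfix s.
Proof. by rewrite /nfix -tr_perm_mx mxtrace_tr. Qed.

Lemma nfix1 : nfix 1 = n%:R.
Proof. by rewrite /nfix perm_mx1 mxtrace1. Qed.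

Lemma nfix_le s : nfix s <= n%:R.
Proof.
rewrite nfixE -[n in n%:R]card_ord -sum1_card natr_sum ler_sum // => i _.
by case: (_ == _).
Qed.

Lemma nfix_sqE s :
  nfix (s * s) = \sum_i \sum_j ((s i == j) && (s j == i))%:R.
Proof.
rewrite nfixE; apply: eq_bigr => i _; rewrite permM (bigD1 (s i)) //= eqxx.
by rewrite big1 ?addr0 // => j /negbTE; rewrite eq_sym => ->.
Qed.

Lemma card_perm_fix (A : {set 'I_n}) :
  #|[pred s : 'S_n | [forall i in A, s i == i]]| = (n - #|A|)`!.
Proof.
rewrite -[n in (n - _)%N]card_ord -(cardsC A) addKn -card_perm.
apply: eq_card => s; rewrite !inE.
apply/forall_inP/subsetP => [fixA i | onCA i iA].
  by rewrite !inE; apply: contraNN => /fixA.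
by apply/negPn/negP => /onCA; rewrite !inE iA.
Qed.

Lemma card_perm_swap i j :
  #|[pred s : 'S_n | (s i == j) && (s j == i)]| = (n - #|[set i; j]|)`!.
Proof.
rewrite -card_perm_fix -!sum1_card (reindex_inj (mulgI (tperm i j))).
apply: eq_bigl => s; rewrite !inE !permM tpermL tpermR.
apply/andP/forall_inP => [[sj si] k | fix_ij].
  by rewrite !inE => /orP[] /eqP ->.
by rewrite !fix_ij // !inE eqxx ?orbT.
Qed.

Lemma card_perm_fix1 i : #|[pred s : 'S_n | s i == i]| = n.-1`!.
Proof.
rewrite -subn1 -(cards1 i) -(setUid [set i]) -card_perm_swap.
by apply: eq_card => s; rewrite !inE andbb.
Qed.

Lemma sum_fact_swap_leq (i : 'I_n) :
  (\sum_j (n - #|[set i; j]|)`! <= 2 * n.-1`!)%N.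
Proof.
rewrite (bigD1 i) //= setUid cards1 subn1 mul2n -addnn leq_add2l.
rewrite (eq_bigr (fun _ => n.-2`!)) => [|j ji]; last first.
  by rewrite cards2 eq_sym ji subn2.
by rewrite sum_nat_const cardC1 card_ord -[n.-2]/(n.-1.-1) mul_fact_pred_leq.
Qed.

Lemma unif_exp_nfix : unif_exp nfix <= 1.
Proof.
rewrite (eq_unif_exp nfixE) unif_exp_sum.
under eq_bigr => i _ do
  rewrite -(unif_probE [pred s : 'S_n | s i == i]) /unif_prob card_perm_fix1.
rewrite sumr_const card_ord card_Sn -mulrnAl -[_ *+ n]mulr_natl -natrM.
by rewrite ler_pdivrMr ?ltr0n ?fact_gt0 // mul1r ler_nat mul_fact_pred_leq.
Qed.

Lemma unif_exp_nfix_sq : unif_exp (fun s => nfix (s * s)) <= 2.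
Proof.
rewrite (eq_unif_exp nfix_sqE) unif_exp_sum.
under eq_bigr => i _.
  rewrite unif_exp_sum.
  under eq_bigr => j _ do
    rewrite -(unif_probE [pred s : 'S_n | _]) /unif_prob card_perm_swap card_Sn.
  rewrite -mulr_suml -natr_sum.
  over.
rewrite -mulr_suml -natr_sum ler_pdivrMr ?ltr0n ?fact_gt0 // -natrM ler_nat.
apply: (@leq_trans (\sum_(i < n) 2 * n.-1`!)).
  exact: leq_sum (fun i _ => sum_fact_swap_leq i).
by rewrite sum_nat_const card_ord mulnCA leq_mul2l mul_fact_pred_leq orbT.
Qed.

Lemma prod_fix_on s (J : {set 'I_n}) (c : R) :
  \prod_i (if i \in J then c * (s i == i)%:R else 1) =
  [forall i in J, s i == i]%:R * c ^+ #|J|.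
Proof.
rewrite -big_mkcond /= big_split /= prodr_const mulrC.
have [fixJ | /forall_inPn[i iJ si]] := boolP [forall i in J, s i == i].
  by rewrite big1 // => i /(forall_inP fixJ) ->.
by rewrite (bigD1 i) //= (negbTE si) !mul0r.
Qed.

Lemma unif_exp_expR_nfix :
  unif_exp (fun s => expR (nfix s)) <= expR (expR 1 - 1).
Proof.
set c : R := expR 1 - 1.
have c_ge0 : 0 <= c by have := expR_ge1Dx (1 : R); rewrite /c; lra.
have expR_bool (b : bool) : expR b%:R = c * b%:R + 1.
  by case: b; rewrite /c ?expR0 /=; ring.
have expR_nfix s : expR (nfix s) =
    \sum_(J : {set 'I_n}) [forall i in J, s i == i]%:R * c ^+ #|J|.
  rewrite nfixE expR_sum (eq_bigr _ (fun i _ => expR_bool _)) bigA_distr.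
  by apply: eq_bigr => J _; rewrite prod_fix_on.
rewrite (eq_unif_exp expR_nfix) unif_exp_sum.
under eq_bigr => J _ do rewrite unif_expMr
  -(unif_probE [pred s : 'S_n | _]) /unif_prob card_perm_fix card_Sn.
rewrite (sum_set_by_card _ _ (fun k => (n - k)`!%:R / n`!%:R * c ^+ k)) card_ord.
rewrite (eq_bigr (fun k : 'I_n.+1 => c ^+ k / k`!%:R)) ?expR_ge_partial_sum //.
move=> k _; have kn : (k <= n)%N by rewrite -ltnS.
have fact_neq0 m : (m`!%:R : R) != 0 by rewrite pnatr_eq0 -lt0n fact_gt0.
rewrite -(bin_fact kn) !natrM -mulr_natr; field.
by rewrite !fact_neq0 pnatr_eq0 -lt0n bin_gt0.
Qed.

End FixedPoints.

Section PermutationSamples.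
Variables (R : realType) (n d : nat).
Implicit Types p : perm_sample n d.
Local Notation nfix := (@nfix R n).

Definition word p a b c e : 'S_n := (p a * (p b)^-1 * p c * (p e)^-1)%g.

Lemma card_perm_sample_gt0 : (0 < #|{: perm_sample n d}|)%N.
Proof. by apply/card_gt0P; exists [ffun => 1%g]. Qed.

Lemma Smat_gram p :
  Smat R p *m (Smat R p)^T = \sum_a \sum_b perm_mx (p a * (p b)^-1)%g.
Proof.
rewrite /Smat raddf_sum /= mulmx_suml; apply: eq_bigr => a _.
rewrite mulmx_sumr; apply: eq_bigr => b _.
by rewrite tr_perm_mx perm_mxM.
Qed.

Lemma mxtrace_Smat_gram p :
  \tr (Smat R p *m (Smat R p)^T) = \sum_a \sum_b nfix (p b * (p a)^-1)%g.
Proof.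
rewrite exchange_big Smat_gram raddf_sum; apply: eq_bigr => a _.
by rewrite raddf_sum.
Qed.

Lemma mxtrace_Smat_gram_sq p :
  \tr ((Smat R p *m (Smat R p)^T) ^+ 2) =
  \sum_a \sum_b \sum_c \sum_e nfix (word p a b c e).
Proof.
rewrite expr2 -mulmxE Smat_gram mulmx_suml raddf_sum; apply: eq_bigr => a _.
rewrite mulmx_suml raddf_sum; apply: eq_bigr => b _.
rewrite mulmx_sumr raddf_sum; apply: eq_bigr => c _.
rewrite mulmx_sumr raddf_sum; apply: eq_bigr => e _.
by rewrite /nfix /word -!perm_mxM !mulgA.
Qed.

Lemma nfix_word_rot p a b c e : nfix (word p a b c e) = nfix (word p c e a b).
Proof. by rewrite /word -mulgA [LHS]nfixC !mulgA. Qed.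

Lemma nfix_word_inv p a b c e : nfix (word p a b c e) = nfix (word p e c b a).
Proof. by rewrite /word -nfixV !invMg !invgK !mulgA. Qed.

Lemma unif_exp_nfix_word_head a b c e : a \notin [:: b; c; e] ->
  unif_exp (fun p => nfix (word p a b c e)) <= 1.
Proof.
rewrite !inE => /norP[ab /norP[ac ae]].
pose W p := ((p b)^-1 * p c * (p e)^-1)%g.
rewrite (eq_unif_exp (g := fun p => nfix (p a * W p)%g)) => [|p]; last first.
  by rewrite /word /W !mulgA.
rewrite (unif_exp_mul_indep a W nfix) ?unif_exp_nfix // => p q pq.
by rewrite /W !pq // eq_sym.
Qed.

Lemma unif_exp_nfix_word_uniq a b c e :
  [\/ a \notin [:: b; c; e], c \notin [:: e; a; b], e \notin [:: c; b; a]
    | b \notin [:: a; e; c]] ->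
  unif_exp (fun p => nfix (word p a b c e)) <= 1.
Proof.
have rot := eq_unif_exp (fun p => nfix_word_rot p _ _ _ _).
have inv := eq_unif_exp (fun p => nfix_word_inv p _ _ _ _).
case=> [| uc | ue | ub]; first exact: unif_exp_nfix_word_head.
- by rewrite rot unif_exp_nfix_word_head.
- by rewrite inv unif_exp_nfix_word_head.
- by rewrite inv rot unif_exp_nfix_word_head.
Qed.

Lemma unif_exp_nfix_word_sq a b : a != b ->
  unif_exp (fun p => nfix (word p a b a b)) <= 2.
Proof.
move=> ab; pose W p := (p b)^-1%g.
rewrite (eq_unif_exp (g := fun p => nfix ((p a * W p) * (p a * W p))%g)) => [|p].
  rewrite (unif_exp_mul_indep a W (fun s => nfix (s * s))) ?unif_exp_nfix_sq //.
  by move=> p q pq; rewrite /W pq // eq_sym.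
by rewrite /word /W !mulgA.
Qed.

Lemma unif_exp_nfix_word a b c e :
  unif_exp (fun p => nfix (word p a b c e)) <=
  n%:R * ((a == b) && (c == e))%:R + n%:R * ((b == c) && (a == e))%:R + 2.
Proof.
have le_n : unif_exp (fun p => nfix (word p a b c e)) <= n%:R.
  rewrite -(unif_exp_cst n%:R card_perm_sample_gt0).
  by apply: ler_unif_exp => p; apply: nfix_le.
have [ab_ce | nt1] := boolP ((a == b) && (c == e)).
  apply: (le_trans le_n); rewrite mulr1 -addrA lerDl.
  by rewrite addr_ge0 ?mulr_ge0 ?ler0n.
have [bc_ae | nt2] := boolP ((b == c) && (a == e)).
  by apply: (le_trans le_n); rewrite mulr0 mulr1 add0r lerDl.
rewrite !mulr0 !add0r.
have [/andP[/eqP ac /eqP be] | nt3] := boolP ((a == c) && (b == e)).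
  rewrite -ac -be unif_exp_nfix_word_sq //.
  by move: nt1; rewrite -ac -be andbb.
have /unif_exp_nfix_word_uniq := four_letters_unique nt1 nt2 nt3.
by move/le_trans; apply; rewrite ler1n.
Qed.

Lemma sum_word_weights :
  \sum_(a < d) \sum_(b < d) \sum_(c < d) \sum_(e < d)
    (n%:R * ((a == b) && (c == e))%:R + n%:R * ((b == c) && (a == e))%:R + 2)
  = 2 * n%:R * d%:R ^+ 2 + 2 * d%:R ^+ 4 :> R.
Proof.
have sum_eq (i : 'I_d) : \sum_j ((i == j)%:R : R) = 1 by apply: sum_andb_eq true i.
under eq_bigr => a _ do under eq_bigr => b _ do under eq_bigr => c _ do
  rewrite !big_split /= -!big_distrr /= !sum_andb_eq sumr_const card_ord.
under eq_bigr => a _ do under eq_bigr => b _ do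
  rewrite !big_split /= -!big_distrr /= sum_eq !sumr_const card_ord.
under eq_bigr => a _ do
  rewrite !big_split /= -!big_distrr /= sumrMnl sum_eq !sumr_const card_ord.
by rewrite !big_split /= !sumr_const card_ord; ring.
Qed.

Lemma unif_exp_mxtrace_Smat_gram_sq :
  unif_exp (fun p => \tr ((Smat R p *m (Smat R p)^T) ^+ 2)) <=
  2 * n%:R * d%:R ^+ 2 + 2 * d%:R ^+ 4.
Proof.
rewrite (eq_unif_exp mxtrace_Smat_gram_sq) -sum_word_weights unif_exp_sum.
apply: ler_sum => a _; rewrite unif_exp_sum; apply: ler_sum => b _.
rewrite unif_exp_sum; apply: ler_sum => c _; rewrite unif_exp_sum.
by apply: ler_sum => e _; apply: unif_exp_nfix_word.
Qed.

Lemma unif_exp_expR_row a :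
  unif_exp (fun p => expR (\sum_b nfix (p b * (p a)^-1)%g)) <=
  expR n%:R * expR (expR 1 - 1) ^+ d.-1.
Proof.
under eq_unif_exp => p do rewrite expR_sum.
rewrite (unif_exp_prod_rel a (fun _ s => expR (nfix s))) nfix1.
rewrite ler_wpM2l ?expR_ge0 // -[d in d.-1]card_ord -(cardC1 a) -prodr_const.
apply: ler_prod => b _; rewrite unif_exp_expR_nfix andbT.
by rewrite unif_exp_ge0 // => s; apply: expR_ge0.
Qed.

Lemma indicator_le_sum_expR_rows p (T : R) : (0 < d)%N ->
  ((d%:R * T <= \tr (Smat R p *m (Smat R p)^T))%R%:R : R) <=
  \sum_a expR (\sum_b nfix (p b * (p a)^-1)%g - T).
Proof.
move=> d_gt0; have [large | _] := boolP (_ <= \tr _)%R.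
  by apply: one_le_sum_expR; rewrite card_ord // -mxtrace_Smat_gram.
by apply: sumr_ge0 => a _; apply: expR_ge0.
Qed.

Lemma unif_prob_mxtrace_Smat_gram_ge (x : R) : (0 < d)%N ->
  unif_prob R [pred p : perm_sample n d |
                 n%:R * d%:R + x * d%:R ^+ 2 <= \tr (Smat R p *m (Smat R p)^T)]
  <= d%:R * expR (- (d%:R * (x - expR 1))).
Proof.
move=> d_gt0.
rewrite (_ : n%:R * d%:R + x * d%:R ^+ 2 = d%:R * (n%:R + x * d%:R)); last by ring.
set T := n%:R + x * d%:R.
rewrite unif_probE.
apply: le_trans (ler_unif_exp _ _ (fun p => indicator_le_sum_expR_rows p T d_gt0)) _.
rewrite unif_exp_sum.
under eq_bigr => a _ do rewrite (eq_unif_exp (fun p => expRD _ _)) unif_expMr.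
apply: le_trans (ler_sum _ (fun a _ => ler_wpM2r (expR_ge0 (- T)) (unif_exp_expR_row a))) _.
rewrite sumr_const card_ord -[_ *+ d]mulr_natl ler_wpM2l ?ler0n //.
rewrite -expRM_natl -!expRD ler_expR /T -(prednK d_gt0) /= -addn1 natrD.
have e_ge2 := expR_ge1Dx (1 : R).
have d_ge0 : 0 <= d.-1%:R :> R by rewrite ler0n.
nra.
Qed.

End PermutationSamples.

Theorem lemma5p2 (R : realType) :
  exists C Cbar : R, forall n d : nat, (1 <= n)%N -> C <= d%:R ->
    (forall x : R, expR 1 <= x ->
       unif_prob R [pred p : perm_sample n d |
                   n%:R * d%:R + x * d%:R ^+ 2 <= \tr (Smat R p *m (Smat R p)^T)]
       <= d%:R * expR (- (d%:R * (x - expR 1))))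
    /\
    unif_exp (fun p : perm_sample n d =>
                \tr ((Smat R p *m (Smat R p)^T) ^+ 2))
      <= 2 * n%:R * d%:R ^+ 2 + Cbar * d%:R ^+ 4.
Proof.
exists 1, 2 => n d _ d_ge1.
have d_gt0 : (0 < d)%N by rewrite -(ler1n R).
split => [x _ |]; first exact: unif_prob_mxtrace_Smat_gram_ge.
exact: unif_exp_mxtrace_Smat_gram_sq.
Qed.
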